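(* Let $\Theta=(\alpha,\rho_r,\rho_d,\rho_s,\rho_0,T)$ with $\alpha>1$, $\rho_r,\rho_d,\rho_s,\rho_0>0$, $T>0$, and let $K_{max}(\Theta)=\min\big(\frac T4,\frac{\rho_r}{3\rho_0},\frac{3\rho_d}{2\rho_0}\big)$. Suppose (C.1) $\min\big(\frac T4,\frac{\rho_r}{3\rho_0},\frac{3\rho_d}{2\rho_0}\big)>10$ and (C.2) $\rho_s/\alpha>1/2$. Then $K_{max}(\Theta)>10$, and for all $K$ with $1\le K\le K_{max}(\Theta)$ and every $M>0$, $$M\Big(2K\rho_0+\frac{4K^2\rho_0}{T}\Big)+\frac{8K^3\rho_0}{3T}\le M\rho_r+K\rho_d.$$ *)

From Stdlib Require Import Reals.
Open Scope R_scope.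

Definition Kmax (rho_r rho_d rho_0 T : R) : R :=
  Rmin (Rmin (T / 4) (rho_r / (3 * rho_0))) (3 * rho_d / (2 * rho_0)).

From Stdlib Require Import Reals Lra Psatz.
Open Scope R_scope.

(* Since K <= T/4, each factor K/T costs at most 1/4: the cost term
   4 K^2 rho_0 / T is at most K rho_0 and the remainder 8 K^3 rho_0 / (3T)
   is at most (2/3) K^2 rho_0.  Hence the left side is at most
   3 K rho_0 M + (2/3) K^2 rho_0, and the bounds K <= rho_r / (3 rho_0) and
   K <= 3 rho_d / (2 rho_0) absorb the two terms into M rho_r and K rho_d. *)

Lemma le_Kmax_quarter (rho_r rho_d rho_0 T K : R) :
  K <= Kmax rho_r rho_d rho_0 T -> 4 * K <= T.
Proof.
  unfold Kmax; intros HK.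
  pose proof (Rmin_l (Rmin (T / 4) (rho_r / (3 * rho_0))) (3 * rho_d / (2 * rho_0))).
  pose proof (Rmin_l (T / 4) (rho_r / (3 * rho_0))).
  lra.
Qed.

Lemma le_Kmax_rho_r (rho_r rho_d rho_0 T K : R) : 0 < rho_0 ->
  K <= Kmax rho_r rho_d rho_0 T -> 3 * rho_0 * K <= rho_r.
Proof.
  unfold Kmax; intros H0 HK.
  pose proof (Rmin_l (Rmin (T / 4) (rho_r / (3 * rho_0))) (3 * rho_d / (2 * rho_0))).
  pose proof (Rmin_r (T / 4) (rho_r / (3 * rho_0))).
  assert (K <= rho_r / (3 * rho_0)) as Hr by lra.
  apply (Rmult_le_compat_l (3 * rho_0)) in Hr; [|lra].
  replace (3 * rho_0 * (rho_r / (3 * rho_0))) with rho_r in Hr by (field; lra).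
  exact Hr.
Qed.

Lemma le_Kmax_rho_d (rho_r rho_d rho_0 T K : R) : 0 < rho_0 ->
  K <= Kmax rho_r rho_d rho_0 T -> 2 * rho_0 * K <= 3 * rho_d.
Proof.
  unfold Kmax; intros H0 HK.
  pose proof (Rmin_r (Rmin (T / 4) (rho_r / (3 * rho_0))) (3 * rho_d / (2 * rho_0))).
  assert (K <= 3 * rho_d / (2 * rho_0)) as Hd by lra.
  apply (Rmult_le_compat_l (2 * rho_0)) in Hd; [|lra].
  replace (2 * rho_0 * (3 * rho_d / (2 * rho_0))) with (3 * rho_d) in Hd by (field; lra).
  exact Hd.
Qed.

Lemma div_le_quarter (K T c : R) : 0 < T -> 4 * K <= T -> 0 <= c ->
  K * c / T <= c / 4.
Proof.
  intros HT HK Hc.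
  apply (Rmult_le_reg_r T); [lra|].
  replace (K * c / T * T) with (K * c) by (field; lra).
  nra.
Qed.

Lemma cost_bound (rho_r rho_d rho_0 T K M : R) :
  0 < rho_0 -> 0 < T -> 0 <= K -> 0 <= M ->
  4 * K <= T -> 3 * rho_0 * K <= rho_r -> 2 * rho_0 * K <= 3 * rho_d ->
  M * (2 * K * rho_0 + 4 * K ^ 2 * rho_0 / T) + 8 * K ^ 3 * rho_0 / (3 * T)
    <= M * rho_r + K * rho_d.
Proof.
  intros H0 HT HK HM HKT Hr Hd.
  assert (Hsq : 4 * K ^ 2 * rho_0 / T <= K * rho_0).
  { replace (4 * K ^ 2 * rho_0 / T) with (K * (4 * K * rho_0) / T) by (field; lra).
    pose proof (div_le_quarter K T (4 * K * rho_0) HT HKT ltac:(nra)); lra. }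
  assert (Hcube : 8 * K ^ 3 * rho_0 / (3 * T) <= 2 / 3 * K ^ 2 * rho_0).
  { replace (8 * K ^ 3 * rho_0 / (3 * T)) with (K * (8 / 3 * K ^ 2 * rho_0) / T)
      by (field; lra).
    pose proof (div_le_quarter K T (8 / 3 * K ^ 2 * rho_0) HT HKT ltac:(nra)); lra. }
  assert (M * (2 * K * rho_0 + 4 * K ^ 2 * rho_0 / T) <= M * rho_r) by nra.
  assert (2 / 3 * K ^ 2 * rho_0 <= K * rho_d) by nra.
  lra.
Qed.

Theorem lemma2 (alpha rho_r rho_d rho_s rho_0 T : R)
  (halpha : 1 < alpha) (hr : 0 < rho_r) (hd : 0 < rho_d) (hs : 0 < rho_s)
  (h0 : 0 < rho_0) (hT : 0 < T)
  (C1 : Rmin (Rmin (T / 4) (rho_r / (3 * rho_0))) (3 * rho_d / (2 * rho_0)) > 10)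
  (C2 : rho_s / alpha > 1 / 2) :
  Kmax rho_r rho_d rho_0 T > 10 /\
  forall K M : R, 1 <= K -> K <= Kmax rho_r rho_d rho_0 T -> 0 < M ->
    M * (2 * K * rho_0 + 4 * K ^ 2 * rho_0 / T) + 8 * K ^ 3 * rho_0 / (3 * T)
      <= M * rho_r + K * rho_d.
Proof.
  split; [exact C1|].
  intros K M HK HKmax HM.
  apply cost_bound; try lra.
  - exact (le_Kmax_quarter rho_r rho_d rho_0 T K HKmax).
  - exact (le_Kmax_rho_r rho_r rho_d rho_0 T K h0 HKmax).
  - exact (le_Kmax_rho_d rho_r rho_d rho_0 T K h0 HKmax).
Qed.
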